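(* Let $g\geqslant0$ be even. With respect to the lexicographic monomial order with $\alpha>\gamma$, the set \[\{\zeta^-_g,\ \gamma\zeta^-_{g-2},\ \gamma^2\zeta^-_{g-4},\ \ldots,\ \gamma^{g/2-1}\zeta^-_2,\ \gamma^{g/2}\}\] is a Gröbner basis for the ideal $J_g^-=J_{g+1}^-$. Consequently, the initial ideal of $J_g^-$ is generated by the monomials $\gamma^i\alpha^{g-2i}$, $0\leqslant i\leqslant g/2$, and the monomials $\alpha^a\gamma^c$ with $0\leqslant c<g/2$ and $0\leqslant a<g-2c$ represent a vector space basis of $\mathbb{C}[\alpha,\gamma]/J_g^-$.
   Context: $\zeta_k^-\in\mathbb{C}[\alpha,\gamma]$: $\zeta^-_i=0$ for $i<0$, $\zeta^-_0=1$, $\zeta^-_{k+1}=\alpha\zeta^-_k-16k^2\zeta^-_{k-1}+2k(k-1)\gamma\zeta^-_{k-2}$ for $k$ odd and $\zeta^-_{k+1}=\alpha\zeta^-_k+2k(k-1)\gamma\zeta^-_{k-2}$ for $k$ even ($k\geqslant0$); $J^-_k=(\zeta^-_k,\zeta^-_{k+1},\zeta^-_{k+2})$. *)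

(* C[alpha,gamma] is modelled as {poly {poly F}}:
   polynomials in alpha ('X) whose coefficients are polynomials in gamma. *)
From mathcomp Require Import all_boot all_order all_algebra.
From mathcomp Require Import reals complex.
Set Implicit Arguments. Unset Strict Implicit. Unset Printing Implicit Defensive.
Import Order.TTheory GRing.Theory Num.Theory.
Local Open Scope ring_scope.

Section Defs.
Variable F : fieldType.
Local Notation P := {poly {poly F}}.

Definition alpha : P := 'X.
Definition gamma : P := ('X)%:P.

Definition mono (m : nat * nat) : P := alpha ^+ m.1 * gamma ^+ m.2.

Definition coefm (p : P) (m : nat * nat) : F := (p`_m.1)`_m.2.

Definition lex_le (m m' : nat * nat) : bool :=
  (m.1 < m'.1)%N || ((m.1 == m'.1) && (m.2 <= m'.2)%N).

Definition is_lead_mono (p : P) (m : nat * nat) : Prop :=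
  coefm p m != 0 /\ forall m', coefm p m' != 0 -> lex_le m' m.

Definition mono_dvd (m m' : nat * nat) : bool := (m.1 <= m'.1)%N && (m.2 <= m'.2)%N.

Definition ideal_gen (S : P -> Prop) (p : P) : Prop :=
  exists (n : nat) (g c : 'I_n -> P), (forall i, S (g i)) /\ p = \sum_(i < n) c i * g i.

Definition is_groebner_basis (G I : P -> Prop) : Prop :=
  (forall g, G g -> I g) /\
  (forall f, I f -> f != 0 -> forall m, is_lead_mono f m ->
     exists g, G g /\ exists mg, is_lead_mono g mg /\ mono_dvd mg m).

Definition initial_ideal (I : P -> Prop) : P -> Prop :=
  ideal_gen (fun q => exists f, I f /\ f != 0 /\
                        exists m, is_lead_mono f m /\ q = mono m).

Definition quotient_basis (I : P -> Prop) (B : seq (nat * nat)) : Prop :=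
  uniq B /\
  (forall p : P, exists lam : nat * nat -> F,
      I (p - \sum_(m <- B) (lam m)%:P%:P * mono m)) /\
  (forall lam : nat * nat -> F,
      I (\sum_(m <- B) (lam m)%:P%:P * mono m) -> forall m, m \in B -> lam m = 0).

(* zeta_aux k = (zeta_k, zeta_{k-1}, zeta_{k-2}), with zeta_i = 0 for i < 0 *)
Fixpoint zeta_aux (k : nat) : P * P * P :=
  match k with
  | 0%N => (1, 0, 0)
  | k'.+1 =>
      let: (a, b, c) := zeta_aux k' in
      (alpha * a - (if odd k' then (16 * k' ^ 2)%N%:R * b else 0)
                 + (2 * k' * (k' - 1))%N%:R * gamma * c, a, b)
  end.

Definition zeta (k : nat) : P := (zeta_aux k).1.1.

Definition Jm (k : nat) : P -> Prop :=
  ideal_gen (fun p => p = zeta k \/ p = zeta k.+1 \/ p = zeta k.+2).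

End Defs.

(* Write h_j = gamma^j zeta_(2n-2j).  For even k the recurrence gives
     zeta_(k+2) = (alpha^2 - 16(k+1)^2) zeta_k + 4k^2 alpha gamma zeta_(k-2)
                  + 4(k+1)k(k-2)(k-3) gamma^2 zeta_(k-4),
   so J_2n is generated by h_0, ..., h_n (with h_n = gamma^n), and the leading monomial of h_j
   is alpha^(2n-2j) gamma^j.  Dividing by the monic zeta_2n in alpha and recursing on the part
   divisible by gamma reduces every polynomial modulo this ideal to one supported on the
   staircase {alpha^a gamma^c : c < n, a < 2n - 2c}, and setting gamma = 0 shows that no nonzero
   element of the ideal is supported there.

   The inclusion J_2n <= J_(2n+1) amounts to h_0 in J_(2n+1).  Modulo J_(2n+1) every gamma h_j
   vanishes, so the recurrence becomes (alpha^2 - l_j) h_j + d_j alpha h_(j+1) + e_j h_(j+2) = 0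
   for 1 <= j <= n, with distinct l_j = 16(2n-2j+1)^2, while zeta_(2n+1) and zeta_(2n+2) give two
   relations between h_0, h_1, h_2.  Hence prod_j (alpha^2 - l_j) h_0 = 0, and the factors
   alpha -+ sqrt l_p are removed one at a time: where alpha acts as th = +-sqrt l_p, the
   recurrence makes th^t h_(p-t) a positive multiple w_t h_p of h_p, and the two relations then
   force a positive multiple of h_p, hence every h_j, into J_(2n+1). *)

From mathcomp Require Import all_boot all_order all_algebra.
From mathcomp Require Import reals complex.
From mathcomp Require Import ring zify.
Set Implicit Arguments. Unset Strict Implicit. Unset Printing Implicit Defensive.
Import Order.TTheory GRing.Theory Num.Theory.
Local Open Scope ring_scope.

Section IdealGen.
Variable F : fieldType.
Implicit Types (S T D : {poly {poly F}} -> Prop) (p q c : {poly {poly F}}).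

Lemma ideal_gen0 S : ideal_gen S 0.
Proof. by exists 0%N, (fun _ => 0), (fun _ => 0); split => [[]//|]; rewrite big_ord0. Qed.

Lemma ideal_gen_mem S p : S p -> ideal_gen S p.
Proof.
by move=> Sp; exists 1%N, (fun _ => p), (fun _ => 1); rewrite big_ord1 mul1r.
Qed.

Lemma ideal_genD S p q : ideal_gen S p -> ideal_gen S q -> ideal_gen S (p + q).
Proof.
move=> [m [g [c [Sg ->]]]] [m' [g' [c' [Sg' ->]]]].
pose pick (X : Type) (f : 'I_m -> X) (f' : 'I_m' -> X) i :=
  match split i with inl j => f j | inr j => f' j end.
exists (m + m')%N, (pick _ g g'), (pick _ c c'); split.
  by move=> i; rewrite /pick; case: (split i).
rewrite big_split_ord; congr (_ + _); apply: eq_bigr => i _.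
  by rewrite /pick -[lshift _ _]/(unsplit (inl i)) unsplitK.
by rewrite /pick -[rshift _ _]/(unsplit (inr i)) unsplitK.
Qed.

Lemma ideal_genMl S c p : ideal_gen S p -> ideal_gen S (c * p).
Proof.
move=> [m [g [d [Sg ->]]]]; exists m, g, (fun i => c * d i); split => //.
by rewrite mulr_sumr; apply: eq_bigr => i _; rewrite mulrA.
Qed.

Lemma ideal_genN S p : ideal_gen S p -> ideal_gen S (- p).
Proof. by rewrite -mulN1r; apply: ideal_genMl. Qed.

Lemma ideal_genB S p q : ideal_gen S p -> ideal_gen S q -> ideal_gen S (p - q).
Proof. by move=> Sp Sq; apply: ideal_genD Sp (ideal_genN Sq). Qed.

Lemma ideal_gen_ind S D :
  D 0 -> (forall p q, D p -> D q -> D (p + q)) -> (forall c p, D p -> D (c * p)) ->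
  (forall p, S p -> D p) -> forall p, ideal_gen S p -> D p.
Proof.
move=> D0 DD DM DS _ [m [g [c [Sg ->]]]].
elim/big_rec: _ => // i p _ Dp; exact/DD/Dp/DM/DS.
Qed.

Lemma ideal_gen_sub S T :
  (forall q, S q -> ideal_gen T q) -> forall p, ideal_gen S p -> ideal_gen T p.
Proof.
move=> ST; apply: ideal_gen_ind => //; [exact: ideal_gen0 | exact: ideal_genD |].
exact: ideal_genMl.
Qed.

Lemma ideal_gen_scale S (a : F) p : a != 0 -> ideal_gen S (a%:P%:P * p) -> ideal_gen S p.
Proof.
move=> a0 /(ideal_genMl (a^-1)%:P%:P).
by rewrite mulrA -!polyCM mulVf // mul1r.
Qed.

End IdealGen.

Section Zeta.
Variable F : fieldType.
Local Notation al := (alpha F).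
Local Notation ga := (gamma F).
Local Notation z := (zeta F).

Lemma zeta_auxSS k : zeta_aux F k.+2 = (z k.+2, z k.+1, z k).
Proof.
rewrite /zeta /= -/(zeta_aux F k).
by case: (zeta_aux F k) => [[a b] c].
Qed.

Lemma zeta0 : z 0 = 1. Proof. by []. Qed.

Lemma zeta1 : z 1 = al.
Proof. by rewrite /zeta /= mulr1 subr0 mul0r mulr0 addr0. Qed.

Lemma zeta2 : z 2 = al ^+ 2 - 16.
Proof. by rewrite /zeta /= !mulr0 addr0 subr0 addr0 !mulr1 exp1n muln1 expr2. Qed.

Lemma zetaSSS k : z k.+3 = al * z k.+2
  - (if odd k then (16 * k.+2 ^ 2)%N%:R * z k.+1 else 0)
  + (2 * k.+2 * k.+1)%N%:R * ga * z k.
Proof.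
rewrite {1}/zeta /= -/(zeta_aux F k.+2) zeta_auxSS /=.
by case: (odd k); rewrite ?subn1.
Qed.

Lemma zeta_evenS k : ~~ odd k ->
  z k.+1 = al * z k + (2 * k * (k - 1))%N%:R * ga * z (k - 2).
Proof.
case: k => [_|[//|k]]; first by rewrite zeta1 zeta0 mul0r mul0r addr0 mulr1.
by rewrite /= negbK => /negbTE ok; rewrite zetaSSS ok subr0 !subSS !subn0.
Qed.

Lemma zeta_evenSS k : ~~ odd k -> z k.+2 =
  al * z k.+1 - (16 * k.+1 ^ 2)%N%:R * z k + (2 * k.+1 * k)%N%:R * ga * z (k - 1).
Proof.
case: k => [_|[//|k]].
  by rewrite zeta2 zeta1 zeta0 muln0 !mul0r addr0 mulr1 expr2.
by rewrite /= negbK => /negbTE ok; rewrite zetaSSS /= ok !subSS subn0.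
Qed.

Lemma zeta_even_rec k : ~~ odd k -> z k.+2 =
    (al ^+ 2 - (16 * k.+1 ^ 2)%N%:R) * z k + (4 * k ^ 2)%N%:R * al * ga * z (k - 2)
  + (4 * k.+1 * k * (k - 2) * (k - 3))%N%:R * ga ^+ 2 * z (k - 4).
Proof.
move=> ok; rewrite zeta_evenSS // zeta_evenS //.
case: k ok => [_|[//|k] ok]; first by rewrite !natrM; ring.
have ok' : ~~ odd k by move: ok; rewrite /= negbK.
rewrite !subSS !subn0 (zeta_evenS ok') !natrM; ring.
Qed.

Lemma size_zeta_monic k : size (z k) = k.+1 /\ z k \is monic.
Proof.
elim/ltn_ind: k => -[|[|[|k]]] IH.
- by rewrite zeta0 size_poly1 monic1.
- by rewrite zeta1 size_polyX monicX.
- rewrite zeta2 -polyC_natr; split; first by rewrite size_XnsubC.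
  exact: monicXnsubC.
have [s0 _] := IH k (ltnW (ltnW (ltnSn _))).
have [s1 _] := IH k.+1 (ltnW (ltnSn _)).
have [s2 m2] := IH k.+2 (ltnSn _).
have sXz : size (al * z k.+2) = k.+4.
  by rewrite /alpha size_monicM ?monicX ?size_polyX ?s2 // -size_poly_eq0 s2.
rewrite zetaSSS -addrA [X in al * _ + X]addrC.
set r := (X in al * _ + X).
have low : (size r < k.+4)%N.
  rewrite (leq_ltn_trans (size_add _ _)) // gtn_max -mulrA -!polyC_natr !mul_polyC.
  apply/andP; split.
    by do 2 apply: leq_ltn_trans (size_scale_leq _ _) _; rewrite s0; lia.
  case: ifP => _; last by rewrite oppr0 size_poly0.
  by rewrite size_opp (leq_ltn_trans (size_scale_leq _ _)) // s1.
rewrite -sXz in low; rewrite size_addl // sXz; split => //.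
by rewrite monicE lead_coefDl // -monicE monicMl // monicX.
Qed.

Lemma size_zeta k : size (z k) = k.+1.
Proof. by case: (size_zeta_monic k). Qed.

Lemma zeta_monic k : z k \is monic.
Proof. by case: (size_zeta_monic k). Qed.

End Zeta.

Section StaircaseIdeal.
Variable F : fieldType.
Local Notation P := {poly {poly F}}.
Local Notation ga := (gamma F).
Local Notation z := (zeta F).

Definition gb_elt n j : P := ga ^+ j * z (2 * n - 2 * j).

Definition gb_ideal n : P -> Prop :=
  ideal_gen (fun p => exists2 j, (j <= n)%N & p = gb_elt n j).

Lemma gb_elt0 n : gb_elt n 0 = z (2 * n).
Proof. by rewrite /gb_elt mul1r muln0 subn0. Qed.

Lemma gb_eltnn n : gb_elt n n = ga ^+ n.
Proof. by rewrite /gb_elt subnn mulr1. Qed.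

Lemma gb_eltSS n j : gb_elt n.+1 j.+1 = ga * gb_elt n j.
Proof. by rewrite /gb_elt mulrA -exprS mulnS mulnS subSS. Qed.

Lemma gb_elt_mem n j : gb_ideal n (gb_elt n j).
Proof.
have [jn|nj] := leqP j n; first by apply: ideal_gen_mem; exists j.
have -> : gb_elt n j = ga ^+ (j - n) * gb_elt n n.
  by rewrite /gb_elt mulrA -exprD subnK ?(ltnW nj) // !subnn; congr (_ * z _); lia.
by apply/ideal_genMl/ideal_gen_mem; exists n.
Qed.

Lemma gb_ideal0 p : gb_ideal 0 p.
Proof.
by rewrite -[p]mulr1 -(expr0 ga) -gb_eltnn; apply/ideal_genMl/gb_elt_mem.
Qed.

Lemma gb_ideal_gammaM n p : gb_ideal n p -> gb_ideal n.+1 (ga * p).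
Proof.
move: p; apply: ideal_gen_ind => [|p q|c p|_ [j _ ->]].
- by rewrite mulr0; apply: ideal_gen0.
- by rewrite mulrDr; apply: ideal_genD.
- by rewrite mulrCA; apply: ideal_genMl.
- by rewrite -gb_eltSS; apply: gb_elt_mem.
Qed.

Lemma gb_ideal_zeta n : gb_ideal n (z (2 * n).+2).
Proof.
have e1 : ga * z (2 * n - 2) = gb_elt n 1 by rewrite /gb_elt muln1.
have e2 : ga * (ga * z (2 * n - 4)) = gb_elt n 2 by rewrite mulrA.
rewrite zeta_even_rec ?oddM // -!mulrA e1 e2 -gb_elt0.
by do 2?apply: ideal_genD; do ?[exact: gb_elt_mem | apply: ideal_genMl].
Qed.

Lemma gb_idealS_decomp n p : gb_ideal n.+1 p ->
  exists a q, gb_ideal n q /\ p = a * z (2 * n).+2 + ga * q.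
Proof.
move: p; apply: ideal_gen_ind.
- by exists 0, 0; split; [apply: ideal_gen0 | rewrite mul0r mulr0 addr0].
- move=> _ _ [a [q [Kq ->]]] [a' [q' [Kq' ->]]].
  exists (a + a'), (q + q'); split; first exact: ideal_genD.
  by rewrite mulrDl mulrDr addrACA.
- move=> c _ [a [q [Kq ->]]]; exists (c * a), (c * q); split; first exact: ideal_genMl.
  by rewrite mulrDr !mulrA [c * ga]mulrC.
- move=> _ [[|j] jn ->].
    by exists 1, 0; rewrite gb_elt0 mul1r mulr0 addr0 mulnS; split => //; apply: ideal_gen0.
  by exists 0, (gb_elt n j); rewrite mul0r add0r gb_eltSS; split => //; apply: gb_elt_mem.
Qed.

End StaircaseIdeal.

Arguments gb_elt {F}.
Arguments gb_ideal {F}.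

Lemma size_map_poly_leq (R S : nzSemiRingType) (f : R -> S) (p : {poly R}) :
  f 0 = 0 -> (size (map_poly f p) <= size p)%N.
Proof. by move=> f0; apply/leq_sizeP => j pj; rewrite coef_map_id0 // nth_default. Qed.

Section NormalForm.
Variable F : fieldType.
Local Notation P := {poly {poly F}}.
Local Notation ga := (gamma F).
Local Notation z := (zeta F).
Implicit Types (p q : P) (m : nat * nat).

Lemma coefm_inj p q : (forall m, coefm p m = coefm q m) -> p = q.
Proof. by move=> e; apply/polyP => a; apply/polyP => c; apply: (e (a, c)). Qed.

Lemma coefm0 m : coefm (0 : P) m = 0.
Proof. by rewrite /coefm !coef0. Qed.

Lemma coefmD p q m : coefm (p + q) m = coefm p m + coefm q m.
Proof. by rewrite /coefm !coefD. Qed.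

Lemma coefm_size p a c : (size p <= a)%N -> coefm p (a, c) = 0.
Proof. by move=> /leq_sizeP pa; rewrite /coefm pa // coef0. Qed.

Lemma coefm_gammaXM k p a c :
  coefm (ga ^+ k * p) (a, c) = if (c < k)%N then 0 else coefm p (a, (c - k)%N).
Proof. by rewrite /coefm /gamma -rmorphXn coefCM coefXnM. Qed.

Lemma coefm_gammaM p a c :
  coefm (ga * p) (a, c) = if c is c'.+1 then coefm p (a, c') else 0.
Proof. by rewrite -[ga]expr1 coefm_gammaXM; case: c => //= c; rewrite subn1. Qed.

Lemma coefm_polyCmono (x : F) m m' : coefm (x%:P%:P * mono F m) m' = x * (m' == m)%:R.
Proof.
case: m m' => a c [a' c'].
rewrite /coefm /mono /alpha /gamma /= -rmorphXn coefCM coefMC coefXn coefCM.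
by rewrite xpair_eqE; case: (a' == a); rewrite /= ?mul1r ?mul0r ?coefXn ?coef0.
Qed.

Definition at_gamma0 p : {poly F} := map_poly (horner_eval 0) p.
Definition div_gamma p : P := map_poly (drop_poly 1) p.

Lemma coef_at_gamma0 p a : (at_gamma0 p)`_a = coefm p (a, 0%N).
Proof. by rewrite coef_map /= horner_evalE horner_coef0. Qed.

Lemma coefm_polyC (r : {poly F}) a c : coefm r^:P (a, c) = if c == 0%N then r`_a else 0.
Proof. by rewrite /coefm coef_map /= coefC. Qed.

Lemma coefm_div_gamma p a c : coefm (div_gamma p) (a, c) = coefm p (a, c.+1).
Proof. by rewrite /coefm coef_map_id0 ?drop_poly0r // coef_drop_poly addn1. Qed.

Lemma gamma_split p : p = (at_gamma0 p)^:P + ga * div_gamma p.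
Proof.
apply: coefm_inj => -[a c]; rewrite coefmD coefm_polyC coefm_gammaM coef_at_gamma0.
by case: c => [|c]; rewrite ?coefm_div_gamma ?addr0 ?add0r.
Qed.

Lemma size_at_gamma0 p : (size (at_gamma0 p) <= size p)%N.
Proof. by apply: size_map_poly_leq; rewrite /= horner_evalE horner0. Qed.

Lemma size_div_gamma p : (size (div_gamma p) <= size p)%N.
Proof. by apply: size_map_poly_leq; rewrite drop_poly0r. Qed.

Lemma at_gamma0_monic p :
  p \is monic -> at_gamma0 p \is monic /\ size (at_gamma0 p) = size p.
Proof.
move=> pm; split; first exact: monic_map.
by rewrite size_map_poly_id0 // (monicP pm) rmorph1 oner_neq0.
Qed.

Lemma div_gammaK p : div_gamma (ga * p) = p.
Proof. by apply: coefm_inj => -[a c]; rewrite coefm_div_gamma coefm_gammaM. Qed.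

Lemma at_gamma0D p q : at_gamma0 (p + q) = at_gamma0 p + at_gamma0 q.
Proof. exact: rmorphD. Qed.

Lemma at_gamma0M p q : at_gamma0 (p * q) = at_gamma0 p * at_gamma0 q.
Proof. exact: rmorphM. Qed.

Lemma at_gamma0_gammaM p : at_gamma0 (ga * p) = 0.
Proof.
by apply/polyP => a; rewrite coef_at_gamma0 coefm_gammaM coef0.
Qed.

Definition in_stair n m : bool := (m.2 < n)%N && (m.1 < 2 * n - 2 * m.2)%N.

Definition stair_supp n p : Prop := forall m, coefm p m != 0 -> in_stair n m.

Lemma stair_supp_div_gamma n p : stair_supp n.+1 p -> stair_supp n (div_gamma p).
Proof. by move=> Sp [a c]; rewrite coefm_div_gamma => /Sp; rewrite /in_stair /=; lia. Qed.

Lemma gb_ideal_stair_eq0 n p : gb_ideal n p -> stair_supp n p -> p = 0.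
Proof.
elim: n p => [|n IH] p Kp Sp.
  apply: coefm_inj => m; rewrite coefm0; apply/eqP; apply: contraT => /Sp.
  by rewrite /in_stair ltn0.
have [a [q [Kq def_p]]] := gb_idealS_decomp Kp.
have [dm sd] := at_gamma0_monic (zeta_monic F (2 * n).+2).
have a0 : at_gamma0 a = 0.
  have: at_gamma0 p = at_gamma0 a * at_gamma0 (z (2 * n).+2).
    by rewrite def_p at_gamma0D at_gamma0M at_gamma0_gammaM addr0.
  have [-> //|a_neq0 e] := eqVneq (at_gamma0 a) 0.
  suff: (size (at_gamma0 p) <= (2 * n).+2)%N.
    by rewrite e size_Mmonic // sd size_zeta; move: a_neq0; rewrite -size_poly_gt0; lia.
  apply/leq_sizeP => j lej; rewrite coef_at_gamma0; apply/eqP; apply: contraT => /Sp.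
  by rewrite /in_stair /=; lia.
have {}def_p : p = ga * (div_gamma a * z (2 * n).+2 + q).
  by rewrite def_p {1}(gamma_split a) a0 rmorph0 add0r mulrDr mulrA.
suff r0 : div_gamma a * z (2 * n).+2 + q = 0 by rewrite def_p r0 mulr0.
apply: IH; first by apply: ideal_genD => //; apply/ideal_genMl/gb_ideal_zeta.
by rewrite -(div_gammaK (_ + q)) -def_p; apply: stair_supp_div_gamma.
Qed.

Lemma gb_normal_form n p :
  exists s, [/\ stair_supp n s, gb_ideal n (p - s) & (size s <= size p)%N].
Proof.
elim: n p => [|n IH] p.
  exists 0; split; [by move=> m; rewrite coefm0 eqxx | exact: gb_ideal0 |].
  by rewrite size_poly0.
set d := z (2 * n).+2; have dm : d \is monic := zeta_monic F _.
set r : P := p %% d.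
have sr : (size r < (2 * n).+3)%N.
  by rewrite -[X in (_ < X)%N](size_zeta F) ltn_modp monic_neq0.
have srp : (size r <= size p)%N.
  have [pd|dp] := ltnP (size p) (size d); first by rewrite /r modp_small.
  by rewrite ltnW // (leq_trans _ dp) // size_zeta.
have [s [Ss Ks ss]] := IH (div_gamma r).
exists ((at_gamma0 r)^:P + ga * s); split.
- move=> [a [|c]]; rewrite coefmD coefm_polyC coefm_gammaM /= ?addr0 ?add0r.
    move=> ra; have : (a < (2 * n).+2)%N.
      rewrite -ltnS (leq_trans _ sr) // ltnS (leq_trans _ (size_at_gamma0 r)) // ltnNge.
      by apply: contra ra => /leq_sizeP ->.
    by rewrite /in_stair /=; lia.
  by move/Ss; rewrite /in_stair /=; lia.
- have -> : p - ((at_gamma0 r)^:P + ga * s) = p %/ d * d + ga * (div_gamma r - s).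
    by rewrite {1}(Pdiv.IdomainMonic.divp_eq dm p) -/r {1}(gamma_split r); ring.
  apply: ideal_genD; last exact: gb_ideal_gammaM.
  by apply: ideal_genMl; rewrite /d -add2n -mulnS -gb_elt0; apply: gb_elt_mem.
- rewrite (leq_trans (size_add _ _)) // geq_max size_map_polyC.
  rewrite (leq_trans (size_at_gamma0 r)) //= /gamma mul_polyC.
  rewrite (leq_trans (size_scale_leq _ _)) // (leq_trans ss) //.
  exact: leq_trans (size_div_gamma r) srp.
Qed.

Lemma lead_gammaX_zeta c k : is_lead_mono (ga ^+ c * z k) (k, c).
Proof.
have lead1 : (z k)`_k = 1 by move: (monicP (zeta_monic F k)); rewrite lead_coefE size_zeta.
split=> [|[a' c']]; first by rewrite coefm_gammaXM ltnn subnn /coefm lead1 coef1 oner_neq0.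
rewrite coefm_gammaXM /lex_le /=; case: ltnP => [|cc' nz]; first by rewrite eqxx.
have : (a' < k.+1)%N.
  by rewrite -(size_zeta F k) ltnNge; apply: contra nz => ?; rewrite coefm_size.
rewrite ltnS leq_eqVlt => /orP[/eqP ea|->//]; rewrite ea eqxx ltnn /=.
by move: nz; rewrite ea /coefm lead1 coef1 /= subn_eq0; case: (c' <= c)%N; rewrite ?eqxx.
Qed.

Lemma gb_ideal_lead_notin_stair n (f : P) m :
  gb_ideal n f -> is_lead_mono f m -> ~~ in_stair n m.
Proof.
(* Otherwise f, minus a normal form of its part of alpha-degree < a, would be a nonzero element
   of the ideal supported on the staircase. *)
case: m => a c Kf [fa fl]; apply/negP => st.
have f_big j : (a < j)%N -> f`_j = 0.
  move=> aj; apply/polyP => c'; rewrite coef0; apply/eqP; apply: contraT => nz.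
  by move: (fl (j, c') nz); rewrite /lex_le /=; lia.
set top : P := (f`_a)%:P * 'X^a.
have coefm_top a' c' : coefm top (a', c') = if a' == a then coefm f (a, c') else 0.
  by rewrite /coefm coefCM coefXn; case: eqP; rewrite ?mulr1 ?mulr0 ?coef0.
have size_rest : (size (f - top)%R <= a)%N.
  apply/leq_sizeP => j aj; rewrite coefB /top coefCM coefXn.
  by case: eqP => [->|ja]; rewrite ?mulr1 ?subrr // mulr0 subr0 f_big //; lia.
have [s [Ss Ks ss]] := gb_normal_form n (f - top).
have sa c' : coefm s (a, c') = 0 by rewrite coefm_size // (leq_trans ss).
suff : top + s = 0.
  move/(congr1 (fun q => coefm q (a, c))).
  by rewrite coefmD coefm_top eqxx sa addr0 coefm0 => /eqP; rewrite (negbTE fa).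
apply: (@gb_ideal_stair_eq0 n).
  by rewrite (_ : _ + _ = f - (f - top - s)); [apply: ideal_genB | ring].
move=> [a' c']; rewrite coefmD coefm_top; have [->|_] := eqVneq a' a; last first.
  by rewrite add0r; apply: Ss.
rewrite sa addr0 => nz; move: (fl _ nz) st; rewrite /lex_le /in_stair /=; lia.
Qed.

Lemma notin_stair_dvd n a c : ~~ in_stair n (a, c) ->
  exists2 i, (i <= n)%N & mono_dvd ((2 * n - 2 * i)%N, i) (a, c).
Proof.
rewrite /in_stair /mono_dvd /= negb_and -!leqNgt.
have [cn|nc] := ltnP c n; last by exists n; rewrite // subnn.
by move=> /= ac; exists c; [exact: ltnW | rewrite /= ac leqnn].
Qed.

Lemma mono_dvd_mul m m' :
  mono_dvd m m' -> mono F m' = mono F (m'.1 - m.1, m'.2 - m.2)%N * mono F m.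
Proof.
case: m m' => a c [a' c'] /andP[/= aa cc]; rewrite /mono /=.
by rewrite -{1}(subnK aa) -{1}(subnK cc) !exprD; ring.
Qed.

Lemma coefm_sum_mono (s : seq (nat * nat)) (x : nat * nat -> F) m : uniq s ->
  coefm (\sum_(m' <- s) (x m')%:P%:P * mono F m') m = if m \in s then x m else 0.
Proof.
elim: s => [|m' s IH] /=; first by rewrite big_nil coefm0.
case/andP => m's us; rewrite big_cons coefmD coefm_polyCmono IH // in_cons eq_sym.
have [<-|_] := eqVneq m' m; last by rewrite mulr0 add0r.
by rewrite (negbTE m's) mulr1 addr0.
Qed.

End NormalForm.

Section EvenIdeal.
Variable F : numFieldType.
Local Notation P := {poly {poly F}}.
Local Notation al := (alpha F).
Local Notation ga := (gamma F).
Local Notation z := (zeta F).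
Implicit Types (S : P -> Prop) (p : P).

Lemma ideal_gen_natK S m p : (0 < m)%N -> ideal_gen S (m%:R * p) -> ideal_gen S p.
Proof.
move=> m0; rewrite -[m%:R]polyC_natr -polyC_natr; apply: ideal_gen_scale.
by rewrite pnatr_eq0 -lt0n.
Qed.

Lemma Jm_zeta k : Jm k (z k). Proof. by apply: ideal_gen_mem; left. Qed.
Lemma Jm_zetaS k : Jm k (z k.+1). Proof. by apply: ideal_gen_mem; right; left. Qed.
Lemma Jm_zetaSS k : Jm k (z k.+2). Proof. by apply: ideal_gen_mem; right; right. Qed.

Lemma Jm_gammaM n p : Jm (2 * n) p -> Jm (2 * n.+1) (ga * p).
Proof.
rewrite mulnS add2n; move: p; apply: ideal_gen_ind => [|p q|c p|_ [->|[->|->]]].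
- by rewrite mulr0; apply: ideal_gen0.
- by rewrite mulrDr; apply: ideal_genD.
- by rewrite mulrCA; apply: ideal_genMl.
- apply: (@ideal_gen_natK _ (2 * (2 * n).+2 * (2 * n).+1)) => //.
  apply: (eq_ind _ _ (ideal_genB (Jm_zetaS _) (ideal_genMl al (Jm_zeta _)))).
  rewrite zeta_evenS /= ?oddM // !subSS !subn0; ring.
- apply: (@ideal_gen_natK _ (2 * (2 * n).+3 * (2 * n).+2)) => //.
  apply: (eq_ind _ _ (ideal_genD (ideal_genB (Jm_zetaSS _) (ideal_genMl al (Jm_zetaS _)))
                       (ideal_genMl (16 * (2 * n).+3 ^ 2)%N%:R (Jm_zeta _)))).
  rewrite zeta_evenSS /= ?oddM // !subSS !subn0; ring.
- exact/ideal_genMl/Jm_zeta.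
Qed.

Lemma Jm_even_gb n p : Jm (2 * n) p <-> gb_ideal n p.
Proof.
split.
  move: p; apply: ideal_gen_sub => _ [->|[->|->]]; last exact: gb_ideal_zeta.
    by rewrite -gb_elt0; apply: gb_elt_mem.
  rewrite zeta_evenS ?oddM // -gb_elt0 -mulrA -[ga * _]/(gb_elt n 1).
  by apply: ideal_genD; apply: ideal_genMl; apply: gb_elt_mem.
elim: n p => [|n IH] p.
  by move=> _; rewrite -[p]mulr1 -(zeta0 F); apply/ideal_genMl/Jm_zeta.
apply: ideal_gen_sub => _ [[|j] jn ->]; first by rewrite gb_elt0; apply: Jm_zeta.
by rewrite gb_eltSS; apply/Jm_gammaM/IH/gb_elt_mem.
Qed.

Lemma Jm_odd_sub n p : Jm (2 * n).+1 p -> Jm (2 * n) p.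
Proof.
move: p; apply: ideal_gen_sub => _ [->|[->|->]]; [exact: Jm_zetaS | exact: Jm_zetaSS |].
rewrite (@zeta_evenS _ (2 * n).+2) /= ?oddM // !subSS !subn0.
apply: ideal_genD; first exact/ideal_genMl/Jm_zetaSS.
by rewrite -mulrA; apply/ideal_genMl/ideal_genMl/Jm_zeta.
Qed.

Lemma Jm1_1 : Jm 1 (1 : P).
Proof.
apply: (@ideal_gen_natK _ 16) => //.
apply: (eq_ind _ _ (ideal_genB (ideal_genMl al (Jm_zeta 1)) (Jm_zetaS 1))).
by rewrite zeta1 zeta2; ring.
Qed.

End EvenIdeal.

Arguments Jm_zeta {F}.
Arguments Jm_zetaS {F}.
Arguments Jm_zetaSS {F}.

(* [L] stands for J_(2n+1) and [h j] for gamma^j zeta_(2n-2j). *)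
Section Peeling.
Variable F : numFieldType.
Local Notation P := {poly {poly F}}.
Local Notation al := (alpha F).
Local Notation sc x := (x%:P%:P : P).

Variable S : P -> Prop.
Local Notation L := (ideal_gen S).
Variable n : nat.
Variable h : nat -> P.
Variables r d e : nat -> nat.
Local Notation lam j := ((r j ^ 2)%N%:R : F).
Hypothesis r_decr : forall i j, (0 < i)%N -> (i < j)%N -> (j <= n)%N -> (r j < r i)%N.
Hypothesis r_gt0 : forall j, (0 < j)%N -> (j <= n)%N -> (0 < r j)%N.
Hypothesis d_gt0 : forall j, (0 < j)%N -> (j < n)%N -> (0 < d j)%N.
Hypothesis h_above : forall j, (n < j)%N -> L (h j).
Hypothesis h_rec : forall j, (0 < j)%N -> (j <= n)%N ->
  L ((al ^+ 2 - (r j ^ 2)%N%:R) * h j + (d j)%:R * al * h j.+1 + (e j)%:R * h j.+2).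
Variables c0 c1 c2 A : nat.
Hypothesis c0_gt0 : (0 < c0)%N.
Hypothesis A_gt0 : (0 < A)%N.
Hypothesis h_rec0 : L (al * h 0 + c0%:R * h 1).
Hypothesis h_rec1 : L (- A%:R * h 0 + c1%:R * (al * h 1 + c2%:R * h 2)).

Section Eigenvector.
Variable p : nat.
Hypotheses (p_gt0 : (0 < p)%N) (p_le : (p <= n)%N).
Variable th : F.
Hypothesis th2 : th ^+ 2 = lam p.
Variable Q : P.
Hypothesis alpha_eigen : forall j, L ((al - sc th) * Q * h j).
Local Notation v j := (Q * h j).

Lemma eigen_th_neq0 : th != 0.
Proof.
apply: contraTneq (r_gt0 p_gt0 p_le) => th0.
move: th2; rewrite th0 expr0n /= => /esym/eqP.
by rewrite pnatr_eq0 expn_eq0 lt0n andbT => /eqP ->.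
Qed.

Lemma eigen_lam_sub j : (0 < j)%N -> (j <= n)%N ->
  ((j < p)%N -> 0 < lam j - th ^+ 2) /\ ((p < j)%N -> lam j - th ^+ 2 < 0).
Proof.
move=> j0 jn; rewrite th2 subr_gt0 subr_lt0 !ltr_nat !ltn_sqr.
by split => ?; apply: r_decr => //; lia.
Qed.

Lemma eigen_alpha j : L (al * v j - sc th * v j).
Proof. by apply: (eq_ind _ _ (alpha_eigen j)); ring. Qed.

Lemma eigen_rec j : (0 < j)%N -> (j <= n)%N ->
  L (sc (th ^+ 2 - lam j) * v j + sc ((d j)%:R * th) * v j.+1 + (e j)%:R * v j.+2).
Proof.
move=> j0 jn; have a0 := eigen_alpha j; have a1 := eigen_alpha j.+1.
apply: (eq_ind _ _ (ideal_genB (ideal_genB (ideal_genMl Q (h_rec j0 jn))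
  (ideal_genD (ideal_genMl al a0) (ideal_genMl (sc th) a0))) (ideal_genMl (d j)%:R a1))).
by rewrite -!polyC_natr; ring.
Qed.

Lemma eigen_vanish_above j : (p < j)%N -> L (v j).
Proof.
move=> pj; suff above t : forall j, (n - t < j)%N -> (p < j)%N -> L (v j).
  by apply: (above n) => //; lia.
elim: t => [|t IH] {pj}j tj pj; first by apply/ideal_genMl/h_above; lia.
have [/IH/(_ pj)//|jt] := ltnP (n - t) j.
have j0 : (0 < j)%N by lia.
have jn : (j <= n)%N by lia.
have [_ /(_ pj)/ltr0_neq0 ne] := eigen_lam_sub j0 jn.
apply: (@ideal_gen_scale _ _ (th ^+ 2 - lam j)); first by rewrite -opprB oppr_eq0.
have v1 : L (v j.+1) by apply: IH; lia.
have v2 : L (v j.+2) by apply: IH; lia.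
apply: (eq_ind _ _ (ideal_genB (ideal_genB (eigen_rec j0 jn)
  (ideal_genMl (sc ((d j)%:R * th)) v1)) (ideal_genMl (e j)%:R v2))).
ring.
Qed.

(* [th ^+ t * v (p - t)] is congruent to [w t * v p] modulo [L]; dividing the
   recurrence by [lam j - th ^+ 2] keeps [w] positive. *)
Fixpoint w t : F :=
  if t is t'.+1 then
    let j := (p - t)%N in
    th ^+ 2 * ((d j)%:R * w t' + (e j)%:R * (if t' is t''.+1 then w t'' else 0))
      / (lam j - th ^+ 2)
  else 1.

Definition w_prev t : F := if t is t'.+1 then w t' else 0.

Lemma w_gt0 t : (t < p)%N -> 0 < w t /\ 0 <= w_prev t.
Proof.
elim: t => [|t IH] tp /=; first by rewrite ltr01 lexx.
have [w0 wp0] := IH (ltnW tp); split; last exact: ltW.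
have j0 : (0 < p - t.+1)%N by lia.
have [/(_ ltac:(lia)) lam_gt _] := @eigen_lam_sub (p - t.+1) j0 ltac:(lia).
apply: divr_gt0 lam_gt; apply: mulr_gt0; first by rewrite th2 ltr0n expn_gt0 r_gt0 //; lia.
apply: ltr_wpDr; first by rewrite mulr_ge0 ?ler0n.
by rewrite mulr_gt0 // ltr0n d_gt0 //; lia.
Qed.

Lemma eigen_transfer t : (t < p)%N ->
  L (sc (th ^+ t) * v (p - t) - sc (w t) * v p) /\
  L (sc (th ^+ t.+1) * v (p - t).+1 - sc (th ^+ 2 * w_prev t) * v p).
Proof.
elim: t => [|t IH] tp.
  rewrite subn0 /= mul1r subrr mulr0 !rmorph0 mul0r subr0; split; first exact: ideal_gen0.
  exact/ideal_genMl/eigen_vanish_above.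
have [C0 C1] := IH (ltnW tp).
set j := (p - t.+1)%N; have jS : (p - t = j.+1)%N by rewrite /j; lia.
rewrite jS in C0 C1; split; last first.
  by apply: (eq_ind _ _ (ideal_genMl (sc (th ^+ 2)) C0)); rewrite /= !exprS; ring.
have j0 : (0 < j)%N by rewrite /j; lia.
have jn : (j <= n)%N by rewrite /j; lia.
have [/(_ ltac:(rewrite /j; lia))/gt_eqF/negbT lam_neq _] := eigen_lam_sub j0 jn.
apply: (@ideal_gen_scale _ _ (th ^+ 2 - lam j)); first by rewrite -oppr_eq0 opprB.
have cw : (th ^+ 2 - lam j) * w t.+1
    = - (th ^+ 2 * ((d j)%:R * w t + (e j)%:R * w_prev t)).
  by rewrite /= -/j -/(w_prev t); field; rewrite -natrX.
rewrite mulrBr [X in _ - X]mulrA -!polyCM cw.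
apply: (eq_ind _ _ (ideal_genB (ideal_genB (ideal_genMl (sc (th ^+ t.+1)) (eigen_rec j0 jn))
  (ideal_genMl (sc ((d j)%:R * th ^+ 2)) C0)) (ideal_genMl (e j)%:R C1))).
rewrite !exprS; ring.
Qed.

Let pred_p_lt : (p.-1 < p)%N.
Proof. by rewrite ltn_predL. Qed.

Let thp : th ^+ p = th * th ^+ p.-1.
Proof. by rewrite -exprS prednK. Qed.

Let transfer_top : L (sc (th ^+ p.-1) * v 1 - sc (w p.-1) * v p) /\
                   L (sc (th ^+ p) * v 2 - sc (th ^+ 2 * w_prev p.-1) * v p).
Proof.
have := eigen_transfer pred_p_lt; rewrite prednK // (_ : p - p.-1 = 1)%N //; lia.
Qed.

Lemma eigen_rel0 : L (sc (th ^+ p) * v 0 + sc (c0%:R * w p.-1) * v p).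
Proof.
apply: (eq_ind _ _ (ideal_genB (ideal_genMl (sc (th ^+ p.-1))
  (ideal_genB (ideal_genMl Q h_rec0) (eigen_alpha 0))) (ideal_genMl c0%:R transfer_top.1))).
by rewrite thp; ring.
Qed.

Lemma eigen_top : L (v p).
Proof.
have rel1 : L (- sc (A%:R * th ^+ p) * v 0
               + sc (c1%:R * th ^+ 2 * (w p.-1 + c2%:R * w_prev p.-1)) * v p).
  apply: (eq_ind _ _ (ideal_genB (ideal_genB (ideal_genMl (sc (th ^+ p))
    (ideal_genB (ideal_genMl Q h_rec1) (ideal_genMl c1%:R (eigen_alpha 1))))
    (ideal_genMl (sc (c1%:R * th ^+ 2)) transfer_top.1))
    (ideal_genMl (c1 * c2)%:R transfer_top.2))).
  by rewrite thp; ring.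
have [wp_gt0 wq_ge0] := w_gt0 pred_p_lt.
have val_gt0 : 0 < A%:R * c0%:R * w p.-1 + c1%:R * th ^+ 2 * (w p.-1 + c2%:R * w_prev p.-1).
  apply: ltr_pwDl; first by rewrite !pmulr_rgt0 ?ltr0n.
  rewrite th2 !mulr_ge0 ?ler0n //.
  by apply: addr_ge0; [exact: ltW | rewrite mulr_ge0 ?ler0n].
apply: (ideal_gen_scale (negbT (gt_eqF val_gt0))).
by apply: (eq_ind _ _ (ideal_genD (ideal_genMl A%:R eigen_rel0) rel1)); ring.
Qed.

Lemma eigen_vanish j : L (v j).
Proof.
have thX_neq0 k : th ^+ k != 0 by rewrite expf_neq0 ?eigen_th_neq0.
have [pj|jp] := ltnP p j; first exact: eigen_vanish_above.
have [->|j0] := posnP j.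
  apply: (ideal_gen_scale (thX_neq0 p)).
  apply: (eq_ind _ _ (ideal_genB eigen_rel0 (ideal_genMl (sc (c0%:R * w p.-1)) eigen_top))).
  by ring.
have [T _] := eigen_transfer (ltac:(lia) : (p - j < p)%N); rewrite subKn // in T.
apply: (ideal_gen_scale (thX_neq0 (p - j)%N)).
by apply: (eq_ind _ _ (ideal_genD T (ideal_genMl (sc (w (p - j))) eigen_top))); ring.
Qed.

End Eigenvector.

Lemma peel_factor m Q : (0 < m)%N -> (m <= n)%N ->
  (forall j, L ((al ^+ 2 - (r m ^ 2)%N%:R) * Q * h j)) -> forall j, L (Q * h j).
Proof.
move=> m0 mn HQ.
have th2 : ((r m)%:R : F) ^+ 2 = lam m by rewrite natrX.
have th2' : (- (r m)%:R : F) ^+ 2 = lam m by rewrite sqrrN natrX.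
have HQ' := @eigen_vanish m m0 mn _ th2 ((al + sc (r m)%:R) * Q).
apply: (eigen_vanish m0 mn th2') => j; apply: (eq_ind _ _ (HQ' _ j)) => [j'|]; last by ring.
by apply: (eq_ind _ _ (HQ j')); rewrite -[(r m ^ 2)%N%:R]polyC_natr -polyC_natr natrX; ring.
Qed.

Lemma tail_prod_mem i j : (0 < i)%N -> (i <= j)%N ->
  L ((\prod_(i <= k < n.+1) (al ^+ 2 - (r k ^ 2)%N%:R)) * h j).
Proof.
suff tail t : forall i j, (n - t < i)%N -> (0 < i)%N -> (i <= j)%N ->
    L ((\prod_(i <= k < n.+1) (al ^+ 2 - (r k ^ 2)%N%:R)) * h j).
  by move=> i0 ij; apply: (tail n) => //; lia.
elim: t => [|t IH] {}i {}j ti i0 ij; first by apply/ideal_genMl/h_above; lia.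
have [/IH|it] := ltnP (n - t) i; first exact.
have iN : (i < n.+1)%N by lia.
rewrite big_ltn //; set T := \prod_(i.+1 <= k < n.+1) _.
have T_mem j' : (i < j')%N -> L (T * h j') by move=> ij'; apply: IH => //; lia.
move: ij; rewrite leq_eqVlt => /orP[/eqP <-|ij]; last first.
  by rewrite -mulrA; apply/ideal_genMl/T_mem.
apply: (eq_ind _ _ (ideal_genB (ideal_genB (ideal_genMl T (h_rec i0 (ltnSE iN)))
  (ideal_genMl ((d i)%:R * al) (T_mem i.+1 (ltnSn i))))
  (ideal_genMl (e i)%:R (T_mem i.+2 (leqnSn _))))).
by ring.
Qed.

Lemma peel_prod m : (m <= n)%N ->
  (forall j, L ((\prod_(1 <= k < m.+1) (al ^+ 2 - (r k ^ 2)%N%:R)) * h j)) ->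
  forall j, L (h j).
Proof.
elim: m => [|m IH] mn Hm; first by move=> j; have := Hm j; rewrite big_geq // mul1r.
apply: IH (ltnW mn) _; apply: (@peel_factor m.+1) => // j.
by rewrite [_ * \prod_(_ <= _ < _) _]mulrC -big_nat_recr.
Qed.

Lemma peeling : L (h 0).
Proof.
set W := \prod_(1 <= k < n.+1) (al ^+ 2 - (r k ^ 2)%N%:R).
have W_mem j : (0 < j)%N -> L (W * h j) by move=> j0; apply: tail_prod_mem.
apply: (peel_prod (leqnn n)) => -[|j]; last exact: W_mem.
apply: (ideal_gen_natK A_gt0).
apply: (eq_ind _ _ (ideal_genB (ideal_genD (ideal_genMl (c1%:R * al) (W_mem 1%N isT))
  (ideal_genMl (c1 * c2)%:R (W_mem 2%N isT))) (ideal_genMl W h_rec1))).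
by rewrite -/W; ring.
Qed.

End Peeling.

Section OddIdeal.
Variable F : numFieldType.
Local Notation P := {poly {poly F}}.
Local Notation al := (alpha F).
Local Notation ga := (gamma F).
Local Notation z := (zeta F).

Lemma Jm_odd_gamma_zeta n : Jm (2 * n).+1 (ga * z (2 * n)).
Proof.
apply: (@ideal_gen_natK _ _ (2 * (2 * n).+2 * (2 * n).+1)) => //.
apply: (eq_ind _ _ (ideal_genB (Jm_zetaSS _) (ideal_genMl al (Jm_zetaS _)))).
by rewrite (@zeta_evenS _ (2 * n).+2) /= ?oddM // !subSS !subn0; ring.
Qed.

Lemma Jm_odd_gamma2M m p : Jm (2 * m) p -> Jm (2 * m).+3 (ga ^+ 2 * p).
Proof.
have ga_z := Jm_odd_gamma_zeta m.+1; rewrite mulnS add2n in ga_z.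
move: p; apply: ideal_gen_ind => [|p q|c p|_ [->|[->|->]]].
- by rewrite mulr0; apply: ideal_gen0.
- by rewrite mulrDr; apply: ideal_genD.
- by rewrite mulrCA; apply: ideal_genMl.
- apply: (@ideal_gen_natK _ _ (2 * (2 * m).+2 * (2 * m).+1)) => //.
  apply: (eq_ind _ _ (ideal_genB (ideal_genMl ga (Jm_zeta _)) (ideal_genMl al ga_z))).
  by rewrite (@zeta_evenS _ (2 * m).+2) /= ?oddM // !subSS !subn0; ring.
- apply: (@ideal_gen_natK _ _ (2 * (2 * m).+3 * (2 * m).+2)) => //.
  apply: (eq_ind _ _ (ideal_genD (ideal_genB (ideal_genMl ga (Jm_zetaS _))
    (ideal_genMl (al * ga) (Jm_zeta _))) (ideal_genMl (16 * (2 * m).+3 ^ 2)%N%:R ga_z))).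
  by rewrite (@zeta_evenSS _ (2 * m).+2) /= ?oddM // !subSS !subn0; ring.
- by rewrite expr2 -mulrA; apply: ideal_genMl.
Qed.

Lemma Jm_odd_gammaM_gb n p : gb_ideal n p -> Jm (2 * n).+1 (ga * p).
Proof.
move: p; apply: ideal_gen_ind => [|p q|c p|_ [[|j] jn ->]].
- by rewrite mulr0; apply: ideal_gen0.
- by rewrite mulrDr; apply: ideal_genD.
- by rewrite mulrCA; apply: ideal_genMl.
- by rewrite gb_elt0; apply: Jm_odd_gamma_zeta.
case: n jn => // m _; rewrite gb_eltSS mulrA -expr2 mulnS add2n.
exact/Jm_odd_gamma2M/Jm_even_gb/gb_elt_mem.
Qed.

Lemma gamma_gb_elt_rec n i : (i < n)%N ->
  let k := (2 * n - 2 * i.+1)%N in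
  ga * gb_elt n i = (al ^+ 2 - (16 * k.+1 ^ 2)%N%:R) * gb_elt n i.+1
    + (4 * k ^ 2)%N%:R * al * gb_elt n i.+2
    + (4 * k.+1 * k * (k - 2) * (k - 3))%N%:R * gb_elt n i.+3.
Proof.
move=> i_lt k; rewrite /gb_elt -/k.
rewrite (_ : 2 * n - 2 * i = k.+2)%N; last by rewrite /k; lia.
rewrite (_ : 2 * n - 2 * i.+2 = k - 2)%N; last by rewrite /k; lia.
rewrite (_ : 2 * n - 2 * i.+3 = k - 4)%N; last by rewrite /k; lia.
rewrite zeta_even_rec; last by rewrite /k -mulnBr oddM.
by rewrite !exprS; ring.
Qed.

Lemma Jm_odd_zeta_even n : Jm (2 * n).+1 (z (2 * n)).
Proof.
case: n => [|m]; first by rewrite zeta0; apply: Jm1_1.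
set n := m.+1; pose k j := (2 * n - 2 * j)%N.
rewrite -gb_elt0.
pose r j := (4 * (k j).+1)%N; pose d j := (4 * k j ^ 2)%N.
pose e j := (4 * (k j).+1 * k j * (k j - 2) * (k j - 3))%N.
apply: (@peeling _ _ n (gb_elt n) r d e _ _ _ _ _ (2 * (2 * n) * (2 * n - 1))
  (2 * (2 * n).+1 * (2 * n)) (2 * (2 * n - 2) * (2 * n - 3)) (16 * (2 * n).+1 ^ 2)).
- by move=> i j i0 ij jn; rewrite ltn_pmul2l // ltnS /k; lia.
- by [].
- by move=> j j0 jn; rewrite muln_gt0 expn_gt0 /k; lia.
- move=> j nj; have -> : gb_elt n j = ga * gb_elt n j.-1.
    by rewrite /gb_elt mulrA -exprS prednK; [congr (_ * z _); lia | lia].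
  exact/Jm_odd_gammaM_gb/gb_elt_mem.
- move=> [//|i] _ iN; apply: (eq_ind _ _ (Jm_odd_gammaM_gb (gb_elt_mem F n i))).
  by rewrite gamma_gb_elt_rec //= expnMn.
- by rewrite /n !muln_gt0; lia.
- by [].
- apply: (eq_ind _ _ (Jm_zeta _)); rewrite zeta_evenS ?oddM // -gb_elt0.
  by rewrite /gb_elt muln1; ring.
- apply: (eq_ind _ _ (ideal_genB (Jm_zetaS _) (ideal_genMl al (Jm_zeta _)))).
  rewrite (@zeta_evenSS _ (2 * n)) ?oddM // (_ : 2 * n - 1 = (2 * n - 2).+1)%N; last by lia.
  rewrite (@zeta_evenS _ (2 * n - 2)); last first.
    by rewrite (_ : 2 * n - 2 = 2 * (n - 1))%N ?oddM //; lia.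
  rewrite -gb_elt0 /gb_elt muln1 (_ : 2 * n - 2 - 2 = 2 * n - 2 * 2)%N; last by lia.
  by rewrite (_ : 2 * n - 2 - 1 = 2 * n - 3)%N; [ring | lia].
Qed.

Lemma Jm_even_odd n (p : P) : Jm (2 * n) p <-> Jm (2 * n).+1 p.
Proof.
split; last exact: Jm_odd_sub.
move: p; apply: ideal_gen_sub => _ [->|[->|->]].
- exact: Jm_odd_zeta_even.
- exact: Jm_zeta.
- exact: Jm_zetaS.
Qed.

End OddIdeal.

Section EvenIdealGroebner.
Variable F : numFieldType.
Local Notation P := {poly {poly F}}.
Local Notation al := (alpha F).
Local Notation ga := (gamma F).
Local Notation z := (zeta F).

Lemma Jm_groebner n : is_groebner_basis
  (fun p => (exists i, (i < n)%N /\ p = ga ^+ i * z (2 * n - 2 * i)) \/ p = ga ^+ n)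
  (Jm (2 * n)).
Proof.
split=> [p [[i [_ ->]]|->]|f /Jm_even_gb Kf _ [a c] lead].
- exact/Jm_even_gb/gb_elt_mem.
- by apply/Jm_even_gb; rewrite -gb_eltnn; apply: gb_elt_mem.
have [i i_le dvd] := notin_stair_dvd (gb_ideal_lead_notin_stair Kf lead).
exists (gb_elt n i); split.
  move: i_le; rewrite leq_eqVlt => /orP[/eqP->|i_lt]; first by right; apply: gb_eltnn.
  by left; exists i.
by exists (2 * n - 2 * i, i)%N; split; first exact: lead_gammaX_zeta.
Qed.

Lemma Jm_initial_ideal n (p : P) : initial_ideal (Jm (2 * n)) p <->
  ideal_gen (fun q => exists i, (i <= n)%N /\ q = ga ^+ i * al ^+ (2 * n - 2 * i)) p.
Proof.
split; move: p; apply: ideal_gen_sub.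
  move=> _ [f [/Jm_even_gb Kf [_ [[a c] [lead ->]]]]].
  have [i i_le /mono_dvd_mul ->] := notin_stair_dvd (gb_ideal_lead_notin_stair Kf lead).
  by apply/ideal_genMl/ideal_gen_mem; exists i; rewrite /mono mulrC.
move=> _ [i [i_le ->]]; apply: ideal_gen_mem.
have lead := lead_gammaX_zeta F i (2 * n - 2 * i).
exists (ga ^+ i * z (2 * n - 2 * i)); split; first exact/Jm_even_gb/gb_elt_mem.
split; first by apply: contraNneq lead.1 => ->; rewrite coefm0.
by exists (2 * n - 2 * i, i)%N; split; last rewrite /mono mulrC.
Qed.

Lemma mem_stair_seq n m :
  (m \in [seq (a, c) | c <- iota 0 n, a <- iota 0 (2 * n - 2 * c)]) = in_stair n m.
Proof.
case: m => a c; rewrite /in_stair /=.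
apply/allpairsPdep/andP => [[c' [a' [+ + [-> ->]]]]|[cn ac]].
  by rewrite !mem_iota; lia.
by exists c, a; rewrite !mem_iota; split => //; lia.
Qed.

Lemma Jm_quotient_basis n : quotient_basis (Jm (F := F) (2 * n))
  [seq (a, c) | c <- iota 0 n, a <- iota 0 (2 * n - 2 * c)].
Proof.
set B := [seq _ | _ <- _, _ <- _].
have uB : uniq B.
  by apply: allpairs_uniq_dep => [|c _|[? ?] [? ?] _ _ [-> ->]]; rewrite ?iota_uniq.
have coefm_B (x : nat * nat -> F) m :
    coefm (\sum_(m' <- B) (x m')%:P%:P * mono F m') m = if in_stair n m then x m else 0.
  by rewrite coefm_sum_mono // mem_stair_seq.
split=> //; split=> [p|x /Jm_even_gb Kx m].
  have [s [Ss Ks _]] := gb_normal_form n p; exists (coefm s); apply/Jm_even_gb.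
  suff -> : \sum_(m <- B) (coefm s m)%:P%:P * mono F m = s by [].
  apply: coefm_inj => m; rewrite coefm_B; case: ifP => // /negbT nst.
  by apply/esym/eqP; apply: contraNT nst; apply: Ss.
rewrite mem_stair_seq => st; have := coefm_B x m.
rewrite (gb_ideal_stair_eq0 Kx) ?coefm0 ?st // => m'.
by rewrite coefm_B; case: ifP => // _; rewrite eqxx.
Qed.

End EvenIdealGroebner.

Theorem proposition5p6 (R : realType) (g : nat) (hg : ~~ odd g) :
  (forall p, Jm (F:=R[i]) g p <-> Jm (F:=R[i]) g.+1 p) /\
  is_groebner_basis
    (fun p => (exists i, (i < g./2)%N /\
                         p = gamma R[i] ^+ i * zeta R[i] (g - 2 * i))
              \/ p = gamma R[i] ^+ (g./2))
    (Jm (F:=R[i]) g) /\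
  (forall p, initial_ideal (Jm (F:=R[i]) g) p <->
     ideal_gen (fun q => exists i, (i <= g./2)%N /\
                           q = gamma R[i] ^+ i * alpha R[i] ^+ (g - 2 * i)) p) /\
  quotient_basis (Jm (F:=R[i]) g)
    [seq (a, c) | c <- iota 0 (g./2), a <- iota 0 (g - 2 * c)].
Proof.
have [n ->] : exists n, g = (2 * n)%N by exists g./2; rewrite mul2n even_halfK.
have -> : (2 * n)./2 = n by rewrite mul2n doubleK.
split; first exact: Jm_even_odd.
split; first exact: Jm_groebner.
split; first exact: Jm_initial_ideal.
exact: Jm_quotient_basis.
Qed.
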